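(* Let $\{x^k\}_{k\in\mathbb N}$ and $\{d^k\}_{k\in\mathbb N}$ be sequences in $\mathbb R^n$ such that $$\sum_{k=1}^\infty \|x^{k+1}-x^k\|\cdot\|d^k\|<\infty.$$ If $\bar x$ is an accumulation point of $\{x^k\}$ and $0$ is an accumulation point of $\{d^k\}$, then there exists an infinite set $J\subset\mathbb N$ such that $x^k\to\bar x$ and $d^k\to 0$ as $k\to\infty$, $k\in J$.
   Context: $\|\cdot\|$ is the Euclidean norm on $\mathbb R^n$ and $\mathbb N=\{1,2,\dots\}$. *)

From Stdlib Require Import Reals.
From Coquelicot Require Import Coquelicot.
Open Scope R_scope.

(* Vectors of R^n are represented as functions nat -> R; only the
   coordinates 0..n-1 matter. *)
Definition vec := nat -> R.

Fixpoint sumsq (n : nat) (v : vec) : R :=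
  match n with O => 0 | S m => sumsq m v + (v m) ^ 2 end.
Definition enorm (n : nat) (v : vec) : R := sqrt (sumsq n v).

Definition vsub (u v : vec) : vec := fun i => u i - v i.

Definition accumulation_point (n : nat) (x : nat -> vec) (a : vec) : Prop :=
  forall eps : R, 0 < eps -> forall N : nat,
    exists k : nat, (N <= k)%nat /\ (1 <= k)%nat /\ enorm n (vsub (x k) a) < eps.

Definition converges_along (n : nat) (J : nat -> Prop) (x : nat -> vec) (a : vec) : Prop :=
  forall eps : R, 0 < eps -> exists N : nat,
    forall k : nat, J k -> (N <= k)%nat -> enorm n (vsub (x k) a) < eps.

Definition infinite_set (J : nat -> Prop) : Prop :=
  forall N : nat, exists k : nat, (N <= k)%nat /\ J k.

From Stdlib Require Import Reals Rgeom Lra Lia ClassicalEpsilon.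
From Coquelicot Require Import Coquelicot.
Open Scope R_scope.

(* Write a_k = dist(x_{k+1}, x_k) * r_k with r_k = ||d_k||.
   Fix eps > 0 and suppose that, from some index on, x_k being eps-close to
   xbar forces r_k >= eps.  Start at an index p, beyond the point where the
   tails of sum a_k are below eps^2/2, with x_p eps/2-close to xbar.  While
   the iterates stay eps-close to xbar every step costs
   a_k >= eps * dist(x_{k+1}, x_k), so the total drift from x_p is below
   eps/2 and by induction the iterates never leave the eps-ball; hence
   r_k >= eps for all large k, contradicting that 0 is a cluster value of r.
   So for every eps there are arbitrarily late indices where both x_k is
   eps-close to xbar and r_k < eps; choosing such indices increasingly for
   eps = 1/(m+1) yields the index set J. *)

Lemma sumsq_nonneg (n : nat) (v : vec) : 0 <= sumsq n v.
Proof. induction n; simpl; nra. Qed.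

Lemma sumsq_ext (n : nat) (u v : vec) :
  (forall i, u i = v i) -> sumsq n u = sumsq n v.
Proof. intros Huv; induction n; simpl; [reflexivity | now rewrite IHn, Huv]. Qed.

Lemma enorm_nonneg (n : nat) (v : vec) : 0 <= enorm n v.
Proof. apply sqrt_pos. Qed.

(* ||u + v|| <= ||u|| + ||v||, by induction on the dimension: adding one
   coordinate is the triangle inequality in the plane for the points
   (||u||_m, u_m) and (-||v||_m, -v_m). *)
Lemma enorm_add_le (n : nat) (u v : vec) :
  enorm n (fun i => u i + v i) <= enorm n u + enorm n v.
Proof.
  unfold enorm; induction n as [|m IH]; cbn [sumsq].
  { rewrite sqrt_0; lra. }
  set (su := sqrt (sumsq m u)) in *; set (sv := sqrt (sumsq m v)) in *.
  assert (Hsu : sumsq m u = su ^ 2) by (unfold su; rewrite pow2_sqrt; auto using sumsq_nonneg).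
  assert (Hsv : sumsq m v = sv ^ 2) by (unfold sv; rewrite pow2_sqrt; auto using sumsq_nonneg).
  assert (Hshrink : sumsq m (fun i => u i + v i) <= (su + sv) ^ 2).
  { rewrite <- (pow2_sqrt (sumsq m _)) by apply sumsq_nonneg.
    pose proof (sqrt_pos (sumsq m (fun i => u i + v i))).
    apply pow_incr; lra. }
  assert (Hplane := triangle su (u m) (- sv) (- v m) 0 0).
  unfold dist_euc, Rsqr in Hplane.
  eapply Rle_trans; [apply sqrt_le_1_alt; apply (Rplus_le_compat_r _ _ _ Hshrink)|].
  rewrite Hsu, Hsv.
  replace ((su + sv) ^ 2 + (u m + v m) ^ 2)
    with ((su - - sv) * (su - - sv) + (u m - - v m) * (u m - - v m)) by ring.
  replace (su ^ 2 + u m ^ 2) with ((su - 0) * (su - 0) + (u m - 0) * (u m - 0)) by ring.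
  replace (sv ^ 2 + v m ^ 2)
    with ((0 - - sv) * (0 - - sv) + (0 - - v m) * (0 - - v m)) by ring.
  exact Hplane.
Qed.

Lemma enorm_vsub_triangle (n : nat) (u v w : vec) :
  enorm n (vsub u w) <= enorm n (vsub u v) + enorm n (vsub v w).
Proof.
  eapply Rle_trans; [| apply enorm_add_le].
  right; unfold enorm; f_equal; apply sumsq_ext; intro i; unfold vsub; ring.
Qed.

Lemma enorm_vsub_0 (n : nat) (u : vec) : enorm n (vsub u (fun _ => 0)) = enorm n u.
Proof. unfold enorm; f_equal; apply sumsq_ext; intro i; unfold vsub; ring. Qed.

Section Drift.

Variables (T : Type) (dist : T -> T -> R).
Hypothesis dist_nonneg : forall a b, 0 <= dist a b.
Hypothesis dist_triangle : forall a b c, dist a c <= dist a b + dist b c.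

Variables (x : nat -> T) (r : nat -> R) (xbar : T).

Definition weighted_step (k : nat) : R := dist (x (S k)) (x k) * r k.

(* If, from index p on, eps-closeness to xbar forces r_k >= eps, and the
   weighted steps from p on sum to less than eps^2/2, then an orbit starting
   eps/2-close to xbar never leaves the eps-ball: each partial sum from p
   dominates eps times the distance travelled from x_p. *)
Lemma drift_stays_close (eps : R) (p : nat) :
  0 < eps ->
  (forall k, (p <= k)%nat -> dist (x k) xbar < eps -> eps <= r k) ->
  (forall m, sum_n_m weighted_step p (p + m) < eps * eps / 2) ->
  dist (x p) xbar < eps / 2 ->
  forall k, (p <= k)%nat -> dist (x k) xbar < eps.
Proof.
  intros Heps Havoid Htail Hstart.
  assert (Hclose : forall k m, eps * dist (x k) (x p) <= sum_n_m weighted_step p (p + m) ->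
            dist (x k) xbar < eps).
  { intros k m Hk; specialize (Htail m).
    pose proof (dist_triangle (x k) (x p) xbar).
    assert (dist (x k) (x p) < eps / 2) by (apply Rmult_lt_reg_l with eps; lra).
    lra. }
  assert (Hstep : forall k, (p <= k)%nat -> dist (x k) xbar < eps ->
            eps * dist (x (S k)) (x k) <= weighted_step k).
  { intros k Hpk Hk; unfold weighted_step.
    specialize (Havoid k Hpk Hk); pose proof (dist_nonneg (x (S k)) (x k)); nra. }
  assert (Hdrift : forall m, eps * dist (x (S (p + m))) (x p) <= sum_n_m weighted_step p (p + m)).
  { induction m as [|m IH].
    - rewrite Nat.add_0_r, sum_n_n; apply Hstep; lia || lra.
    - rewrite <- plus_n_Sm, sum_n_Sm by lia.
      pose proof (Hstep (S (p + m)) ltac:(lia) (Hclose _ _ IH)).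
      pose proof (dist_triangle (x (S (S (p + m)))) (x (S (p + m))) (x p)).
      change plus with Rplus; nra. }
  intros k Hpk; destruct (Nat.eq_dec k p) as [->|Hne]; [lra|].
  replace k with (S (p + (k - p - 1))) by lia; eapply Hclose; apply Hdrift.
Qed.

Lemma joint_cluster :
  ex_series weighted_step ->
  (forall eps, 0 < eps -> forall N, exists k, (N <= k)%nat /\ dist (x k) xbar < eps) ->
  (forall eps, 0 < eps -> forall N, exists k, (N <= k)%nat /\ r k < eps) ->
  forall eps, 0 < eps -> forall N,
    exists k, (N <= k)%nat /\ dist (x k) xbar < eps /\ r k < eps.
Proof.
  intros Hsum Hx Hr eps Heps N.
  destruct (Classical_Prop.classic
    (exists k, (N <= k)%nat /\ dist (x k) xbar < eps /\ r k < eps)) as [|Hnone]; auto.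
  exfalso.
  assert (Havoid : forall k, (N <= k)%nat -> dist (x k) xbar < eps -> eps <= r k).
  { intros k HNk Hk; apply Rnot_lt_le; intro Hrk; apply Hnone; eauto. }
  assert (Hhalf_sq : 0 < eps * eps / 2) by nra.
  destruct (Cauchy_ex_series _ Hsum (mkposreal _ Hhalf_sq)) as [N0 HN0]; simpl in HN0.
  destruct (Hx (eps / 2) ltac:(lra) (Nat.max N N0)) as [p [Hp Hxp]].
  assert (Hfar : forall k, (p <= k)%nat -> eps <= r k).
  { intros k Hpk; apply Havoid; [lia|].
    apply (drift_stays_close eps p); auto.
    - intros j Hj; apply Havoid; lia.
    - intro m; eapply Rle_lt_trans; [apply Rle_abs | apply HN0; lia]. }
  destruct (Hr eps Heps p) as [k [Hpk Hrk]].
  specialize (Hfar k Hpk); lra.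
Qed.

End Drift.

Lemma increasing_selection (P : nat -> nat -> Prop) :
  (forall m N, exists k, (N <= k)%nat /\ P m k) ->
  exists s : nat -> nat, (forall m, (s m < s (S m))%nat) /\ (forall m, P m (s m)).
Proof.
  intros HP.
  assert (Hpick : forall m N, {k | (N <= k)%nat /\ P m k})
    by (intros m N; apply constructive_indefinite_description, HP).
  set (pick m N := proj1_sig (Hpick m N)).
  assert (Hspec : forall m N, (N <= pick m N)%nat /\ P m (pick m N))
    by (intros m N; exact (proj2_sig (Hpick m N))).
  exists (fix s m := match m with O => pick O O | S m' => pick m (S (s m')) end).
  split; intro m; [apply Hspec | destruct m; apply Hspec].
Qed.

Lemma increasing_le (s : nat -> nat) :
  (forall m, (s m < s (S m))%nat) -> forall m j, (m <= j)%nat -> (s m <= s j)%nat.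
Proof.
  intros Hs m j Hmj; induction Hmj as [|j _ IH]; [lia|].
  specialize (Hs j); lia.
Qed.

Lemma increasing_ge_id (s : nat -> nat) :
  (forall m, (s m < s (S m))%nat) -> forall m, (m <= s m)%nat.
Proof. intros Hs m; induction m; [lia | specialize (Hs m); lia]. Qed.

Lemma converges_along_range (n : nat) (y : nat -> vec) (a : vec) (s : nat -> nat) :
  (forall m, (s m < s (S m))%nat) ->
  (forall m, enorm n (vsub (y (s m)) a) < / (INR m + 1)) ->
  converges_along n (fun k => exists m, k = s m) y a.
Proof.
  intros Hs Hy eps Heps.
  destruct (archimed_cor1 eps Heps) as [M [HM HM0]].
  exists (s M); intros k [m ->] Hk.
  assert (HMm : (M <= m)%nat).
  { destruct (Nat.le_gt_cases M m) as [|Hlt]; auto.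
    pose proof (increasing_le s Hs (S m) M Hlt); specialize (Hs m); lia. }
  apply le_INR in HMm; apply lt_0_INR in HM0.
  eapply Rlt_le_trans; [apply Hy|].
  assert (/ (INR m + 1) <= / INR M) by (apply Rinv_le_contravar; lra).
  lra.
Qed.

Theorem mainTheorem1 (n : nat) (x d : nat -> vec) (xbar : vec) :
  ex_series (fun j : nat =>
    enorm n (vsub (x (S j + 1)%nat) (x (S j))) * enorm n (d (S j))) ->
  accumulation_point n x xbar ->
  accumulation_point n d (fun _ => 0) ->
  exists J : nat -> Prop,
    (forall k, J k -> (1 <= k)%nat) /\ infinite_set J /\
    converges_along n J x xbar /\ converges_along n J d (fun _ => 0).
Proof.
  intros Hsum Hx Hd.
  set (dist u v := enorm n (vsub u v)).
  set (xs j := x (S j)); set (rs j := enorm n (d (S j))).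
  assert (Hjoint : forall eps, 0 < eps -> forall N,
            exists j, (N <= j)%nat /\ dist (xs j) xbar < eps /\ rs j < eps).
  { apply joint_cluster.
    - intros; apply enorm_nonneg.
    - intros; apply enorm_vsub_triangle.
    - revert Hsum; apply ex_series_ext; intro j.
      unfold weighted_step, xs; now rewrite Nat.add_1_r.
    - intros eps Heps N; destruct (Hx eps Heps (S N)) as [[|j] [? [? ?]]]; [lia|].
      exists j; split; [lia | assumption].
    - intros eps Heps N; destruct (Hd eps Heps (S N)) as [[|j] [? [? Hj]]]; [lia|].
      exists j; split; [lia | unfold rs; now rewrite <- enorm_vsub_0]. }
  destruct (increasing_selection
    (fun m j => dist (xs j) xbar < / (INR m + 1) /\ rs j < / (INR m + 1)))
    as [s [Hs Hsel]].
  { intros m N; apply Hjoint, Rinv_0_lt_compat; pose proof (pos_INR m); lra. }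
  assert (HSs : forall m, (S (s m) < S (s (S m)))%nat) by (intro m; specialize (Hs m); lia).
  exists (fun k => exists m, k = S (s m)); split; [|split; [|split]].
  - intros k [m ->]; lia.
  - intro N; exists (S (s N)); split; [pose proof (increasing_ge_id s Hs N); lia | eauto].
  - apply converges_along_range; [exact HSs | apply Hsel].
  - apply converges_along_range; [exact HSs|].
    intro m; rewrite enorm_vsub_0; apply Hsel.
Qed.
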